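(* Let $X_n=(\mathbb{C}^n,\|\cdot\|_{X_n})$ be a Banach lattice, $J\subset\mathbb{N}_0^n$, and $\alpha\in\Lambda(m,n)$. Then (i) $c_{X_n}(\alpha)\,c_{X_n'}(\alpha)\le\frac{m^m}{\alpha^\alpha}$; (ii) $c_{X_n}(\alpha)\le\frac{\|\alpha\|_{X_n}^m}{\alpha^\alpha}$.
   Context: A Banach lattice $X_n=(\mathbb{C}^n,\|\cdot\|)$ is a norm with $\|z\|\le\|w\|$ whenever $|z_k|\le|w_k|$ for all $k$. $X_n'$ is its Köthe dual: $\mathbb{C}^n$ with $\|x\|_{X_n'}=\sup\{\sum_k|x_ky_k|:\|y\|_{X_n}\le1\}$. $\Lambda(m,n)=\{\alpha\in\mathbb{N}_0^n:|\alpha|=m\}$, $\alpha^\alpha=\prod_i\alpha_i^{\alpha_i}$ (with $0^0=1$), and $\|\alpha\|_{X_n}$ is the norm of $(\alpha_1,\dots,\alpha_n)$ in $X_n$. For a normed space $Y_n=(\mathbb{C}^n,\|\cdot\|)$, $c_{Y_n}(\alpha)=1/\sup_{z\in B_{Y_n}}|z^\alpha|$, $B_{Y_n}$ the open unit ball. *)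

From HB Require Import structures.
From mathcomp Require Import all_boot all_order all_algebra.
From mathcomp Require Import all_classical all_reals.
From mathcomp Require Import complex.
Set Implicit Arguments. Unset Strict Implicit. Unset Printing Implicit Defensive.
Import Order.TTheory GRing.Theory Num.Theory.
Local Open Scope ring_scope.
Local Open Scope classical_set_scope.

Definition cabs (R : realType) (c : R[i]) : R := Normc.normc c.

Definition is_norm (R : realType) (n : nat) (N : ('I_n -> R[i]) -> R) : Prop :=
  [/\ forall z, N z = 0 -> z = (fun _ => 0),
      forall z w, N (fun k => z k + w k) <= N z + N w
    & forall (c : R[i]) z, N (fun k => c * z k) = cabs c * N z].

(* Banach lattice on C^n (completeness is automatic in finite dimension):
   a norm which is monotone w.r.t. coordinatewise moduli. *)
Definition banach_lattice (R : realType) (n : nat) (N : ('I_n -> R[i]) -> R) : Prop :=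
  is_norm N /\
  forall z w, (forall k, cabs (z k) <= cabs (w k)) -> N z <= N w.

Definition kothe_dual (R : realType) (n : nat) (N : ('I_n -> R[i]) -> R)
  (x : 'I_n -> R[i]) : R :=
  sup [set (\sum_k cabs (x k * y k)) | y in [set y | N y <= 1]].

Definition monom (R : realType) (n : nat) (alpha : 'I_n -> nat)
  (z : 'I_n -> R[i]) : R[i] := \prod_k z k ^+ alpha k.

Definition cY (R : realType) (n : nat) (N : ('I_n -> R[i]) -> R)
  (alpha : 'I_n -> nat) : R :=
  (sup [set cabs (monom alpha z) | z in [set z | N z < 1]])^-1.

(* alpha^alpha = prod_i alpha_i^alpha_i, with 0^0 = 1 *)
Definition apow (R : realType) (n : nat) (alpha : 'I_n -> nat) : R :=
  \prod_k ((alpha k)%:R ^+ alpha k).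

Definition avec (R : realType) (n : nat) (alpha : 'I_n -> nat) : 'I_n -> R[i] :=
  fun k => (alpha k)%:R.

From HB Require Import structures.
From mathcomp Require Import all_boot all_order all_algebra.
From mathcomp Require Import all_classical all_reals.
From mathcomp Require Import complex.
From mathcomp Require Import ring lra.
Import Order.TTheory GRing.Theory Num.Theory.
Local Open Scope ring_scope.
Local Open Scope classical_set_scope.
Local Open Scope complex_scope.
Set Implicit Arguments. Unset Strict Implicit.

(* Part (ii): for [l < 1] the point [z = l alpha / N alpha] lies in the open unit
   ball of [X = (C^n, N)] and [|z^alpha| = l^m alpha^alpha / (N alpha)^m].
   Part (i): take [a] in the open unit ball with [|a^alpha|] almost maximal.
   Moving [|a|] towards any [|y|] in the closed unit ball cannot increase the
   monomial to first order, which says that [sum_k alpha_k |y_k| / |a_k|] is at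
   most about [m].  Hence [w_k = alpha_k / (m |a_k|)] lies essentially in the
   unit ball of the Köthe dual, and [|w^alpha| = alpha^alpha / (m^m |a^alpha|)],
   so the two suprema multiply to at least [alpha^alpha / m^m].
   The errors vanish as [l -> 1], by Bernoulli's inequality. *)

Section RealInequalities.
Variable R : realFieldType.

Lemma bernoulli_ineq (x : R) n : -1 <= x -> 1 + n%:R * x <= (1 + x) ^+ n.
Proof.
move=> x_ge; elim: n => [|n IHn]; first by rewrite mul0r addr0 expr0.
have x1_ge0 : 0 <= 1 + x by rewrite -lerBlDl sub0r.
have := ler_wpM2l x1_ge0 IHn; rewrite exprS -natr1.
have : 0 <= n%:R * x ^+ 2 by rewrite mulr_ge0 ?sqr_ge0.
nra.
Qed.

Lemma sum_le_prod1D (I : finType) (d : I -> R) :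
  (forall i, 0 <= d i) -> 1 + \sum_i d i <= \prod_i (1 + d i).
Proof.
move=> d_ge0.
suff [] : 0 <= \sum_i d i /\ 1 + \sum_i d i <= \prod_i (1 + d i) by [].
elim/big_ind2: _ => [|s1 p1 s2 p2 [s1_ge0 le1] [s2_ge0 le2]|i _].
- by rewrite addr0.
- split; first exact: addr_ge0.
  have : 0 <= s1 * s2 by exact: mulr_ge0.
  have := ler_pM (addr_ge0 ler01 s1_ge0) (addr_ge0 ler01 s2_ge0) le1 le2.
  nra.
- by split.
Qed.

Lemma ler_of_expn_mul (X Y : R) m :
  0 <= X -> (forall l, 0 < l < 1 -> l ^+ m * X <= Y) -> X <= Y.
Proof.
move=> X_ge0 le_XY; rewrite leNgt; apply/negP => ltYX.
have half : 0 < (2%:R^-1 : R) < 1 by rewrite invr_gt0 invf_lt1 ?ltr0n ?ltr1n.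
have Y_ge0 : 0 <= Y.
  apply: le_trans (le_XY _ half).
  by rewrite mulr_ge0 // exprn_ge0 // invr_ge0.
have X_gt0 : 0 < X by apply: le_lt_trans ltYX.
pose d := (X - Y) / (2 * (m%:R + 1) * X).
have den_gt0 : 0 < 2 * (m%:R + 1) * X by rewrite !mulr_gt0 // ltr_wpDl.
have d_gt0 : 0 < d by rewrite divr_gt0 // subr_gt0.
have dE : d * (2 * (m%:R + 1) * X) = X - Y by rewrite divfK // gt_eqF.
have m_ge0 : 0 <= m%:R :> R by [].
have d_lt1 : d < 1 by nra.
have := le_XY (1 - d); rewrite ltrBlDr ltrDl d_gt0 subr_gt0 d_lt1 => /(_ isT).
have := ler_wpM2r X_ge0 (@bernoulli_ineq (- d) m _).
rewrite lerN2 (ltW d_lt1) => /(_ isT).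
nra.
Qed.

Lemma prod_expD_ge (I : finType) (a : I -> nat) (x y : I -> R) (t : R) :
  (forall i, 0 <= x i) -> (forall i, 0 <= y i) -> 0 <= t ->
  \prod_i x i ^+ a i * (1 + t * \sum_i (a i)%:R * (y i / x i))
    <= \prod_i (x i + t * y i) ^+ a i.
Proof.
move=> x_ge0 y_ge0 t_ge0.
pose d i := t * ((a i)%:R * (y i / x i)).
have d_ge0 i : 0 <= d i by rewrite /d mulr_ge0 // mulr_ge0 // divr_ge0.
apply: le_trans (_ : \prod_i (x i ^+ a i * (1 + d i)) <= _).
  rewrite big_split /= mulr_sumr ler_wpM2l ?sum_le_prod1D //.
  by apply: prodr_ge0 => i _; rewrite exprn_ge0.
apply: ler_prod => i _; rewrite mulr_ge0 ?exprn_ge0 ?addr_ge0 //=.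
have [a0 | a_gt0] := posnP (a i).
  by rewrite /d a0 !expr0 mul0r mulr0 addr0 mulr1.
have [-> | x_gt0] := eqVneq (x i) 0.
  by rewrite expr0n gtn_eqF //= mul0r exprn_ge0 // addr_ge0 // mulr_ge0.
have -> : x i + t * y i = x i * (1 + t * (y i / x i)) by field.
rewrite exprMn ler_wpM2l ?exprn_ge0 // /d mulrCA.
by rewrite bernoulli_ineq // (le_trans _ (mulr_ge0 t_ge0 (divr_ge0 _ _))) ?lerN10.
Qed.

Lemma natr_expn_self_gt0 m : 0 < m%:R ^+ m :> R.
Proof. by have [-> | m_gt0] := posnP m; rewrite ?expr0 ?exprn_gt0 ?ltr0n. Qed.

Lemma invr_le_of_eq0_or_ge (x y : R) : 0 < x -> y = 0 \/ x <= y -> y^-1 <= x^-1.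
Proof.
move=> x_gt0 [-> | le_xy]; first by rewrite invr0 invr_ge0 ltW.
by rewrite lef_pV2 ?posrE // (lt_le_trans x_gt0).
Qed.

End RealInequalities.

Section ComplexModulus.
Variable R : realType.

Lemma cabs0 : cabs (0 : R[i]) = 0.
Proof. exact: Normc.normc0. Qed.

Lemma cabs_ge0 (c : R[i]) : 0 <= cabs c.
Proof. by case: c => a b; rewrite /cabs /Normc.normc sqrtr_ge0. Qed.

Lemma cabsM (c d : R[i]) : cabs (c * d) = cabs c * cabs d.
Proof. exact: Normc.normcM. Qed.

Lemma cabs_real (x : R) : cabs x%:C = `|x|.
Proof. by rewrite /cabs /Normc.normc /= expr0n /= addr0 sqrtr_sqr. Qed.

Lemma cabs_nat k : cabs (k%:R : R[i]) = k%:R.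
Proof. by rewrite -(rmorph_nat (real_complex R)) cabs_real normr_nat. Qed.

Lemma cabs_monom n (alpha : 'I_n -> nat) (z : 'I_n -> R[i]) :
  cabs (monom alpha z) = \prod_k cabs (z k) ^+ alpha k.
Proof.
rewrite /cabs /monom (big_morph _ (@Normc.normcM R) (@Normc.normc1 R)).
apply: eq_bigr => k _; elim: (alpha k) => [|e IHe]; first exact: Normc.normc1.
by rewrite !exprS Normc.normcM IHe.
Qed.

End ComplexModulus.

Section BanachLattice.
Variables (R : realType) (n : nat) (N : ('I_n -> R[i]) -> R).
Hypothesis HN : banach_lattice N.

Lemma blnormZ c z : N (fun k => c * z k) = cabs c * N z.
Proof. by case: HN => -[_ _ ->]. Qed.

Lemma blnormD z w : N (fun k => z k + w k) <= N z + N w.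
Proof. by case: HN => -[_ + _] _; apply. Qed.

Lemma blnorm_mono z w : (forall k, cabs (z k) <= cabs (w k)) -> N z <= N w.
Proof. by case: HN => _; apply. Qed.

Lemma blnorm_eq0 z : N z = 0 -> z = (fun=> 0).
Proof. by case: HN => -[+ _ _] _; apply. Qed.

Lemma blnorm0 : N (fun=> 0) = 0.
Proof. by have := blnormZ 0 (fun=> 0); rewrite cabs0 !mul0r. Qed.

Lemma blnorm_ge0 z : 0 <= N z.
Proof. by rewrite -blnorm0; apply: blnorm_mono => k; rewrite cabs0 cabs_ge0. Qed.

Lemma blnorm_abs z : N (fun k => (cabs (z k))%:C) = N z.
Proof.
by apply/eqP; rewrite eq_le !blnorm_mono // => k; rewrite cabs_real ger0_norm ?cabs_ge0.
Qed.

Lemma blnorm_perturb a y t : N a < 1 -> N y <= 1 -> 0 <= t < 1 ->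
  N (fun k => (1 - t)%:C * ((cabs (a k))%:C + t%:C * (cabs (y k))%:C)) < 1.
Proof.
move=> Na_lt1 Ny_le1 /andP[t_ge0 t_lt1].
rewrite blnormZ cabs_real ger0_norm ?subr_ge0 ?ltW //.
have := blnormD (fun k => (cabs (a k))%:C) (fun k => t%:C * (cabs (y k))%:C).
rewrite blnormZ cabs_real ger0_norm // !blnorm_abs => le_sum.
have := blnorm_ge0 (fun k => (cabs (a k))%:C + t%:C * (cabs (y k))%:C).
have := blnorm_ge0 a; nra.
Qed.

End BanachLattice.

Section MonomialSuprema.
Variables (R : realType) (n : nat) (alpha : 'I_n -> nat) (m : nat).
Hypothesis alpha_m : (\sum_k alpha k)%N = m.

Definition monom_image (Q : ('I_n -> R[i]) -> R) : set R :=
  [set cabs (monom alpha z) | z in [set z | Q z < 1]].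

Lemma cYE Q : cY Q alpha = (sup (monom_image Q))^-1.
Proof. by []. Qed.

(* [sup] of an empty or unbounded set is [0], and then [cY Q alpha = 0^-1 = 0]. *)
Lemma sup_monom_image_cases Q :
  sup (monom_image Q) = 0 \/ has_ubound (monom_image Q) /\ 0 < sup (monom_image Q).
Proof.
have [[[_ [z Qz _]] ub] | /sup_out] := pselect (has_sup (monom_image Q)); last by left.
have : 0 <= sup (monom_image Q).
  by apply: le_trans (cabs_ge0 (monom alpha z)) _; apply: ub_le_sup => //; exists z.
by rewrite le_eqVlt => /orP[/eqP <- | sup_gt0]; [left | right].
Qed.

Lemma apow_gt0 : 0 < apow R alpha.
Proof.
apply: prodr_gt0 => k _; have [-> | alpha_gt0] := posnP (alpha k); first by rewrite expr0.
by rewrite exprn_gt0 // ltr0n.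
Qed.

Lemma cabs_monom_scale (c : R) z :
  cabs (monom alpha (fun k => c%:C * z k)) = `|c| ^+ m * cabs (monom alpha z).
Proof.
rewrite !cabs_monom -alpha_m -prodrXr -big_split /=.
by apply: eq_bigr => k _; rewrite cabsM cabs_real exprMn.
Qed.

(* [dlog_monom a y] is the derivative of [log |z^alpha|] at [|a|] in the direction [|y|]. *)
Definition dlog_monom (a y : 'I_n -> R[i]) : R :=
  \sum_k (alpha k)%:R * (cabs (y k) / cabs (a k)).

Variable N : ('I_n -> R[i]) -> R.
Hypothesis HN : banach_lattice N.

Lemma blnorm_avec_expn_gt0 : 0 < N (avec R alpha) ^+ m.
Proof.
have [-> | m_gt0] := posnP m; first by rewrite expr0.
rewrite exprn_gt0 // lt_def blnorm_ge0 // andbT; apply/eqP => /(blnorm_eq0 HN) avec0.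
suff : (\sum_k alpha k)%N = 0%N by rewrite alpha_m => m0; rewrite m0 in m_gt0.
apply/eqP; rewrite sum_nat_eq0; apply/forallP => k.
by have /eqP := congr1 (fun f => f k) avec0; rewrite /avec pnatr_eq0.
Qed.

Lemma sup_monom_image_ge_avec : has_ubound (monom_image N) ->
  apow R alpha / N (avec R alpha) ^+ m <= sup (monom_image N).
Proof.
move=> ub; set A := N (avec R alpha).
have A_ge0 : 0 <= A by exact: blnorm_ge0.
apply: ler_of_expn_mul => [|l /andP[l_gt0 l_lt1]].
  by rewrite divr_ge0 ?exprn_ge0 // ltW // apow_gt0.
have lA_ge0 : 0 <= l / A by rewrite divr_ge0 // ltW.
apply: ub_le_sup ub _ _; exists (fun k => (l / A)%:C * avec R alpha k).
  rewrite /= blnormZ // cabs_real ger0_norm // -/A.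
  by have [-> | A_neq0] := eqVneq A 0; [rewrite mulr0 | rewrite divfK].
rewrite cabs_monom_scale ger0_norm // cabs_monom.
under eq_bigr do rewrite cabs_nat.
by rewrite exprMn exprVn mulrAC -mulrA.
Qed.

Lemma monom_perturb_le a y t : has_ubound (monom_image N) ->
  N a < 1 -> N y <= 1 -> 0 <= t < 1 ->
  (1 - t) ^+ m * (cabs (monom alpha a) * (1 + t * dlog_monom a y))
    <= sup (monom_image N).
Proof.
move=> ub Na_lt1 Ny_le1 /andP[t_ge0 t_lt1].
pose c k := (1 - t)%:C * ((cabs (a k))%:C + t%:C * (cabs (y k))%:C).
have c_le : cabs (monom alpha c) <= sup (monom_image N).
  by apply: ub_le_sup => //; exists c => //; apply: blnorm_perturb; rewrite ?t_ge0.
apply: le_trans c_le.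
have t1_ge0 : 0 <= 1 - t by rewrite subr_ge0 ltW.
rewrite cabs_monom_scale ger0_norm //; apply: ler_wpM2l; first exact: exprn_ge0.
have cabs_c k : cabs ((cabs (a k))%:C + t%:C * (cabs (y k))%:C) = cabs (a k) + t * cabs (y k).
  by rewrite -rmorphM -rmorphD cabs_real ger0_norm // addr_ge0 ?mulr_ge0 ?cabs_ge0.
rewrite !cabs_monom; under [X in _ <= X]eq_bigr do rewrite cabs_c.
by apply: prod_expD_ge => // k; apply: cabs_ge0.
Qed.

(* With [t = (1 - l) / (2 m)] Bernoulli gives [(1 - t)^m >= (1 + l) / 2], and
   [(1 + l)^2 / (4 l)] is exactly the slack that keeps [dlog_monom a y <= m / l]. *)
Lemma dlog_monom_le a l : has_ubound (monom_image N) -> 0 < l < 1 -> N a < 1 ->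
  4 * l * sup (monom_image N) < (1 + l) ^+ 2 * cabs (monom alpha a) ->
  forall y, N y <= 1 -> dlog_monom a y <= m%:R / l.
Proof.
move=> ub /andP[l_gt0 l_lt1] Na_lt1 near_max y Ny_le1.
have [m0 | m_gt0] := posnP m.
  rewrite /dlog_monom m0 mul0r big1 // => k _.
  move: alpha_m; rewrite m0 => /eqP; rewrite sum_nat_eq0 => /forallP/(_ k)/eqP ->.
  by rewrite mul0r.
have m_gt0' : 0 < m%:R :> R by rewrite ltr0n.
pose t := (1 - l) / (2 * m%:R).
have mt : m%:R * t = (1 - l) / 2 by rewrite /t; field; rewrite gt_eqF.
have t_gt0 : 0 < t by rewrite divr_gt0 ?mulr_gt0 // subr_gt0.
have t_lt1 : t < 1.
  suff : m%:R * t < m%:R by rewrite -[X in _ < X]mulr1 ltr_pM2l.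
  have m_ge1 : 1 <= m%:R :> R by rewrite ler1n.
  rewrite mt; lra.
have t_01 : 0 <= t < 1 by rewrite (ltW t_gt0) t_lt1.
have := monom_perturb_le ub Na_lt1 Ny_le1 t_01.
have := @bernoulli_ineq _ (- t) m; rewrite lerN2 (ltW t_lt1) mulrN => /(_ isT).
set fa := cabs (monom alpha a) in near_max *; set S := dlog_monom a y.
set M := sup (monom_image N) in near_max *.
have fa_le_M : fa <= M by apply: ub_le_sup => //; exists a.
have fa_ge0 : 0 <= fa by exact: cabs_ge0.
have S_ge0 : 0 <= S by rewrite sumr_ge0 // => k _; rewrite mulr_ge0 ?divr_ge0 ?cabs_ge0.
have fa_gt0 : 0 < fa by nra.
rewrite mt => bern pert.
have perturb_M : (1 + l) / 2 * (fa * (1 + t * S)) <= M.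
  apply: le_trans pert; apply: ler_wpM2r; last lra.
  by rewrite mulr_ge0 // addr_ge0 // mulr_ge0 // ltW.
have first_order : 2 * l * (1 + t * S) < 1 + l.
  have l1fa_gt0 : 0 < (1 + l) * fa by rewrite mulr_gt0 // addr_gt0.
  rewrite -(ltr_pM2l l1fa_gt0).
  have l4_ge0 : 0 <= 4 * l by rewrite mulr_ge0 // ltW.
  have := ler_wpM2l l4_ge0 perturb_M; lra.
have : 2 * l * m%:R + 2 * (l * S) * (m%:R * t) < m%:R * (1 + l).
  by move: first_order; rewrite -(ltr_pM2l m_gt0'); lra.
rewrite mt => first_order_m.
have : l * S * (1 - l) < m%:R * (1 - l) by lra.
rewrite ltr_pM2r ?subr_gt0 // => lS_lt_m.
by rewrite ler_pdivlMr // mulrC ltW.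
Qed.

Lemma sup_kothe_monom_image_ge a s lam :
  has_ubound (monom_image (kothe_dual N)) -> 0 <= lam -> lam * s < 1 ->
  (forall y, N y <= 1 -> dlog_monom a y <= s) ->
  lam ^+ m * (apow R alpha / cabs (monom alpha a))
    <= sup (monom_image (kothe_dual N)).
Proof.
move=> ub lam_ge0 lam_s dlog_le.
pose w k := lam%:C * ((alpha k)%:R / cabs (a k))%:C.
have ratio_ge0 k : 0 <= (alpha k)%:R / cabs (a k) by rewrite divr_ge0 ?cabs_ge0.
apply: ub_le_sup => //; exists w.
  rewrite /= /kothe_dual; apply: le_lt_trans lam_s; apply: ge_sup.
    by exists (\sum_k cabs (w k * 0)), (fun=> 0) => //=; rewrite blnorm0 // ler01.
  move=> _ [y Ny_le1 <-].
  have -> : \sum_k cabs (w k * y k) = lam * dlog_monom a y.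
    rewrite /dlog_monom mulr_sumr; apply: eq_bigr => k _.
    rewrite !cabsM !cabs_real !ger0_norm //.
    by rewrite -!mulrA [_^-1 * _]mulrC.
  by rewrite ler_wpM2l // dlog_le.
rewrite cabs_monom_scale ger0_norm //; congr (_ * _).
rewrite !cabs_monom /apow -prodfV -big_split; apply: eq_bigr => k _.
by rewrite cabs_real ger0_norm // exprMn exprVn.
Qed.

Lemma sup_monom_image_mul_ge :
  has_ubound (monom_image N) -> has_ubound (monom_image (kothe_dual N)) ->
  0 < sup (monom_image N) ->
  apow R alpha / m%:R ^+ m
    <= sup (monom_image N) * sup (monom_image (kothe_dual N)).
Proof.
move=> ub ub' M_gt0; set M := sup (monom_image N).
apply: (@ler_of_expn_mul _ _ _ (2 * m)) => [|l l_01].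
  by rewrite divr_ge0 ?exprn_ge0 // ltW // apow_gt0.
have /andP[l_gt0 l_lt1] := l_01.
have q_lt1 : 4 * l / (1 + l) ^+ 2 < 1.
  rewrite ltr_pdivrMr ?exprn_gt0 ?addr_gt0 // mul1r.
  have : 0 < (1 - l) ^+ 2 by rewrite exprn_gt0 // subr_gt0.
  lra.
have qM_lt : 4 * l / (1 + l) ^+ 2 * M < M by rewrite gtr_pMl.
have image_neq0 : monom_image N !=set0.
  by exists (cabs (monom alpha (fun=> 0))), (fun=> 0); rewrite //= blnorm0 ?ltr01.
have [_ [a Na_lt1 <-] near_max] := sup_gt image_neq0 qM_lt.
set fa := cabs (monom alpha a) in near_max *.
have fa_le_M : fa <= M by apply: ub_le_sup => //; exists a.
have q_ge0 : 0 <= 4 * l / (1 + l) ^+ 2.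
  by rewrite divr_ge0 ?exprn_ge0 ?mulr_ge0 ?addr_ge0 // ltW.
have fa_gt0 : 0 < fa by apply: le_lt_trans near_max; rewrite mulr_ge0 // ltW.
(* Scaling the dual witness by [l^2 / m] rather than [l / m] keeps its dual norm
   [l] strictly below 1. *)
have lam_ge0 : 0 <= l ^+ 2 / m%:R by rewrite divr_ge0 ?sqr_ge0.
have lam_s : l ^+ 2 / m%:R * (m%:R / l) < 1.
  have [-> | m_gt0] := posnP m; first by rewrite !(mul0r, mulr0, invr0).
  by rewrite mulrA divfK ?pnatr_eq0 -?lt0n // expr2 mulfK ?gt_eqF.
have near_max' : 4 * l * M < (1 + l) ^+ 2 * fa.
  by move: near_max; rewrite mulrAC ltr_pdivrMr ?exprn_gt0 ?addr_gt0 // [fa * _]mulrC.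
have := sup_kothe_monom_image_ge ub' lam_ge0 lam_s (dlog_monom_le ub l_01 Na_lt1 near_max').
have -> : l ^+ (2 * m) * (apow R alpha / m%:R ^+ m)
    = fa * ((l ^+ 2 / m%:R) ^+ m * (apow R alpha / fa)).
  by rewrite exprM [(_ / _) ^+ m]exprMn exprVn; field; rewrite !gt_eqF ?natr_expn_self_gt0.
apply: ler_pM => //; first exact: ltW.
by rewrite mulr_ge0 ?exprn_ge0 // divr_ge0 ?ltW ?apow_gt0.
Qed.

End MonomialSuprema.

Theorem theorem2p19 (R : realType) (n : nat) (N : ('I_n -> R[i]) -> R)
  (m : nat) (alpha : 'I_n -> nat) :
  banach_lattice N ->
  (\sum_k alpha k)%N = m ->
  cY N alpha * cY (kothe_dual N) alpha <= (m%:R ^+ m) / apow R alpha /\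
  cY N alpha <= (N (avec R alpha)) ^+ m / apow R alpha.
Proof.
move=> HN alpha_m; rewrite !cYE; split.
- rewrite -invfM -invf_div; apply: invr_le_of_eq0_or_ge.
    by rewrite divr_gt0 ?apow_gt0 ?natr_expn_self_gt0.
  have [-> | [ub M_gt0]] := sup_monom_image_cases alpha N; first by left; rewrite mul0r.
  have [-> | [ub' _]] := sup_monom_image_cases alpha (kothe_dual N).
    by left; rewrite mulr0.
  by right; apply: sup_monom_image_mul_ge.
- rewrite -invf_div; apply: invr_le_of_eq0_or_ge.
    by rewrite divr_gt0 ?apow_gt0 ?(blnorm_avec_expn_gt0 alpha_m).
  have [-> | [ub _]] := sup_monom_image_cases alpha N; first by left.
  by right; apply: sup_monom_image_ge_avec.
Qed.
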